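(* Let $A$ be a commutative ring, $B=A[z_1,\ldots,z_n]$, and $a_1,\ldots,a_n\in A$ a regular sequence in $A$. Let $\mathcal D:B^n\to B$ be the $A$-linear map $\mathcal D(h_1,\ldots,h_n)=\sum_{i=1}^n(\partial_{z_i}h_i-a_ih_i)$, and let $\mathfrak a=Aa_1+\cdots+Aa_n$. Let $g\in B$ have total degree $d$ and let $g_d$ be its homogeneous component of degree $d$. If $g\in\mathrm{Im}\,\mathcal D$, then every coefficient of $g_d$ lies in $\mathfrak a$.
   Context: $\partial_{z_i}$ denotes the formal partial derivative with respect to $z_i$ on $B$. *)

From HB Require Import structures.
From mathcomp Require Import all_boot all_order all_algebra.
Set Implicit Arguments. Unset Strict Implicit. Unset Printing Implicit Defensive.
Import GRing.Theory.
Local Open Scope ring_scope.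

Definition mon (n : nat) := n.-tuple nat.

Definition mdeg (n : nat) (m : mon n) : nat := (\sum_(j < n) tnth m j)%N.

Definition incr (n : nat) (m : mon n) (i : 'I_n) : mon n :=
  [tuple (tnth m j + (j == i))%N | j < n].

(* a polynomial of B = A[z_1..z_n] is given by its coefficient function,
   which must be finitely supported *)
Definition fin_supp (A : comNzRingType) (n : nat) (p : mon n -> A) : Prop :=
  exists s : seq (mon n), forall m, p m != 0 -> m \in s.

(* formal partial derivative d/dz_i, coefficientwise:
   coefficient of z^m in d_i h is (m_i + 1) * (coefficient of z^(m+e_i) in h) *)
Definition pderiv (A : comNzRingType) (n : nat) (i : 'I_n) (h : mon n -> A)
  : mon n -> A := fun m => h (incr m i) *+ (tnth m i).+1.

Definition Dop (A : comNzRingType) (n : nat) (a : 'I_n -> A)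
  (h : 'I_n -> mon n -> A) : mon n -> A :=
  fun m => \sum_(i < n) (pderiv i (h i) m - a i * h i m).

(* membership in the ideal A a_1 + ... + A a_k (first k elements) *)
Definition in_ideal (A : comNzRingType) (n : nat) (a : 'I_n -> A) (k : nat)
  (x : A) : Prop :=
  exists c : 'I_n -> A, x = \sum_(i < n | (i < k)%N) c i * a i.

Definition regular_seq (A : comNzRingType) (n : nat) (a : 'I_n -> A) : Prop :=
  (forall (i : 'I_n) (x : A), in_ideal a i (x * a i) -> in_ideal a i x)
  /\ ~ in_ideal a n 1.

(* If the h_i have degree <= d, the degree-d coefficients of D h are those of
   - sum_i a_i h_i, hence lie in (a_1, ..., a_n).  Otherwise let E > d be the top
   degree of the h_i.  The degree-E part of D h = g is - sum_i a_i h_i^(E) = 0, and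
   since a is regular the first Koszul homology vanishes:
   h_i^(E) = sum_j b_ij a_j with b alternating.  Then k_i = - sum_j (d/dz_j - a_j) b_ij
   satisfies D k = 0 (the operators d/dz_j - a_j commute) and k_i^(E) = h_i^(E), so
   h - k is a preimage of g of smaller degree. *)
From HB Require Import structures.
From mathcomp Require Import all_boot all_order all_algebra.
From Stdlib Require Import IndefiniteDescription.
Set Implicit Arguments. Unset Strict Implicit. Unset Printing Implicit Defensive.
Import GRing.Theory.
Local Open Scope ring_scope.

Lemma tnth_incr n (m : mon n) i j : tnth (incr m i) j = (tnth m j + (j == i))%N.
Proof. by rewrite tnth_mktuple. Qed.

Lemma mdeg_incr n (m : mon n) i : mdeg (incr m i) = (mdeg m).+1.
Proof.
rewrite /mdeg (eq_bigr _ (fun j _ => tnth_incr m i j)) big_split /= -addn1.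
by congr (_ + _)%N; rewrite (bigD1 i) //= eqxx big1 // => j /negbTE ->.
Qed.

Lemma incrC n (m : mon n) i j : incr (incr m i) j = incr (incr m j) i.
Proof. by apply: eq_from_tnth => k; rewrite !tnth_incr addnAC. Qed.

Definition alternating (A : zmodType) (I : Type) (b : I -> I -> A) : Prop :=
  (forall i j, b i j = - b j i) /\ (forall i, b i i = 0).

Lemma sum_alternating (A : zmodType) (I : finType) (b : I -> I -> A) :
  alternating b -> \sum_i \sum_j b i j = 0.
Proof.
move=> [bN b0]; pose r (i : I) : nat := enum_rank i.
rewrite pair_big /= (bigID (fun p : I * I => (r p.1 < r p.2)%N)) /=.
rewrite (bigID (fun p : I * I => p.1 == p.2)) /=.
rewrite big1 ?add0r; last by move=> [i j] /andP[_ /eqP /= ->].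
rewrite (reindex_inj (h := fun p : I * I => (p.2, p.1))) /=; last first.
  by move=> [x1 x2] [y1 y2] /= [-> ->].
rewrite [X in X + _]big_mkcond [X in _ + X]big_mkcond -big_split big1 // => -[i j] _ /=.
case: ltngtP => h /=.
- by rewrite ifT ?(bN j i) ?addNr //; apply: contraTneq h => ->; rewrite ltnn.
- by rewrite addr0.
- by rewrite (enum_rank_inj (val_inj h)) b0 addr0.
Qed.

Lemma big_ord_ltnS (A : zmodType) n k (lt_kn : (k < n)%N) (F : 'I_n -> A) :
  \sum_(i < n | (i < k.+1)%N) F i = \sum_(i < n | (i < k)%N) F i + F (Ordinal lt_kn).
Proof.
rewrite (bigD1 (Ordinal lt_kn)) //= addrC; congr (_ + _).
by apply: eq_bigl => i; rewrite ltnS leq_eqVlt -val_eqE /=; case: ltngtP.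
Qed.

Lemma big_ord_ltn (A : zmodType) n (F : 'I_n -> A) :
  \sum_(i < n | (i < n)%N) F i = \sum_i F i.
Proof. by apply: eq_bigl => i; rewrite ltn_ord. Qed.

Section Koszul.
Variables (A : comNzRingType) (n : nat) (a : 'I_n -> A).
Hypothesis reg : forall (i : 'I_n) (x : A), in_ideal a i (x * a i) -> in_ideal a i x.

Definition extend_alternating (k : nat) (b : 'I_n -> 'I_n -> A) (c : 'I_n -> A)
  (i j : 'I_n) : A :=
  if (i < k)%N && (j < k)%N then b i j
  else if (i == k :> nat) && (j < k)%N then c j
  else if (j == k :> nat) && (i < k)%N then - c i
  else 0.

Lemma extend_alternatingP k b c :
  alternating b -> alternating (extend_alternating k b c).
Proof.
move=> [bN b0]; rewrite /extend_alternating; split=> [i j|i]; last first.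
  by case: ltngtP => // _; rewrite b0.
case: (ltngtP i k) => [ik|ki|/eqP ik]; case: (ltngtP j k) => [jk|kj|/eqP jk] //=;
  rewrite ?ik ?jk ?(ltn_eqF ik) ?(ltn_eqF jk) ?(gtn_eqF ki) ?(gtn_eqF kj) ?oppr0 ?opprK //=.
Qed.

Lemma regular_syzygy k :
  (k <= n)%N -> forall x : 'I_n -> A,
  \sum_(i < n | (i < k)%N) a i * x i = 0 ->
  exists2 b, alternating b &
    forall i : 'I_n, (i < k)%N -> x i = \sum_(j < n | (j < k)%N) b i j * a j.
Proof.
elim: k => [|k IH] lt_kn x syz.
  by exists (fun _ _ => 0) => //; split=> // *; rewrite oppr0.
pose k' := Ordinal lt_kn.
rewrite big_ord_ltnS in syz.
have /reg[c xk] : in_ideal a k' (x k' * a k').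
  exists (fun i => - x i).
  rewrite (eq_bigr (fun i => - (a i * x i))) => [|i _]; last by rewrite mulNr mulrC.
  by move/eqP: syz; rewrite sumrN addrC addr_eq0 mulrC => /eqP.
have [b' b'_alt b'x] : exists2 b', alternating b' & forall i : 'I_n, (i < k)%N ->
    x i + c i * a k' = \sum_(j < n | (j < k)%N) b' i j * a j.
  apply: IH; first exact: ltnW.
  rewrite (eq_bigr (fun i => a i * x i + c i * a i * a k')); last first.
    by move=> i _; rewrite mulrDr mulrCA mulrA.
  by rewrite big_split /= -mulr_suml -xk mulrC.
exists (extend_alternating k b' c); first exact: extend_alternatingP.
move=> i; rewrite ltnS leq_eqVlt big_ord_ltnS /extend_alternating /=.
case/orP=> [/eqP ik | ik].
  have -> : i = k' by apply: val_inj.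
  rewrite /= ltnn eqxx /= mul0r addr0 xk; apply: eq_bigr => j jk.
  by rewrite jk.
rewrite ik ltnn eqxx (ltn_eqF ik) /= mulNr -[x i](addrK (c i * a k')) b'x //.
by congr (_ - _); apply: eq_bigr => j jk; rewrite jk.
Qed.
End Koszul.

Section DOperator.
Variables (A : comNzRingType) (n : nat) (a : 'I_n -> A).

Definition Dterm (i : 'I_n) (f : mon n -> A) : mon n -> A :=
  fun m => pderiv i f m - a i * f m.

Lemma DopE h m : Dop a h m = \sum_i Dterm i (h i) m.
Proof. by []. Qed.

Lemma Dterm_ext i f g : f =1 g -> Dterm i f =1 Dterm i g.
Proof. by move=> fg m; rewrite /Dterm /pderiv !fg. Qed.

Lemma Dterm0 i f m : f =1 (fun=> 0) -> Dterm i f m = 0.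
Proof. by move=> f0; rewrite /Dterm /pderiv !f0 mul0rn mulr0 subr0. Qed.

Lemma DtermN i f m : Dterm i (fun m => - f m) m = - Dterm i f m.
Proof. by rewrite /Dterm /pderiv mulNrn mulrN opprB opprK addrC. Qed.

Lemma DtermB i f g m :
  Dterm i (fun m => f m - g m) m = Dterm i f m - Dterm i g m.
Proof. by rewrite /Dterm /pderiv mulrnBl mulrBr !opprD !opprK addrACA. Qed.

Lemma Dterm_sum i (F : 'I_n -> mon n -> A) m :
  Dterm i (fun m => \sum_j F j m) m = \sum_j Dterm i (F j) m.
Proof. by rewrite /Dterm /pderiv -sumrMnl mulr_sumr -sumrB. Qed.

Lemma DtermC i j f m : Dterm i (Dterm j f) m = Dterm j (Dterm i f) m.
Proof.
rewrite /Dterm /pderiv !mulrnBl !mulrBr !mulrnAr -!mulrnA incrC !tnth_incr.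
have -> : ((tnth m j + (j == i)).+1 * (tnth m i).+1
           = (tnth m i + (i == j)).+1 * (tnth m j).+1)%N.
  by case: (eqVneq i j) => [->|ne] //; rewrite !addn0 mulnC.
by rewrite (mulrCA (a j)) !opprD !opprK addrACA.
Qed.

(* The [Dterm i] commute, so the double sum below is alternating in [(i, j)]. *)
Lemma Dop_alternating_eq0 (c : 'I_n -> 'I_n -> mon n -> A) :
  (forall m, alternating (fun i j => c i j m)) ->
  forall m, Dop a (fun i m => \sum_j Dterm j (c i j) m) m = 0.
Proof.
move=> c_alt m; rewrite DopE.
under eq_bigr do rewrite Dterm_sum.
apply: sum_alternating; split=> [i j|i].
  have cN : c j i =1 (fun m => - c i j m) by move=> m'; case: (c_alt m') => ->.
  rewrite DtermC (Dterm_ext _ (Dterm_ext _ cN)).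
  by rewrite (Dterm_ext _ (fun m => DtermN i (c i j) m)) DtermN opprK.
apply: Dterm0 => m'; apply: Dterm0 => m''.
by case: (c_alt m'') => _ ->.
Qed.

Definition deg_le (E : nat) (f : mon n -> A) : Prop :=
  forall m, f m != 0 -> (mdeg m <= E)%N.

Lemma deg_le_eq0 E f m : deg_le E f -> (E < mdeg m)%N -> f m = 0.
Proof. by move=> fE; apply: contraTeq => /fE; rewrite -leqNgt. Qed.

Lemma deg_le_trans E1 E2 f : (E1 <= E2)%N -> deg_le E1 f -> deg_le E2 f.
Proof. by move=> le12 fE m /fE /leq_trans; apply. Qed.

Lemma fin_supp_deg_le f : fin_supp f -> exists E, deg_le E f.
Proof.
by case=> s fs; exists (\max_(m <- s) mdeg m) => m /fs ms; exact: leq_bigmax_seq.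
Qed.

(* Derivatives lower the degree. *)
Lemma Dop_top_coef h m :
  (forall i, deg_le (mdeg m) (h i)) -> Dop a h m = - \sum_i a i * h i m.
Proof.
move=> hm; rewrite DopE -sumrN; apply: eq_bigr => i _.
by rewrite /Dterm /pderiv (deg_le_eq0 (hm i)) ?mdeg_incr // mul0rn sub0r.
Qed.

Lemma Dop_top_coef_in_ideal h m :
  (forall i, deg_le (mdeg m) (h i)) -> in_ideal a n (Dop a h m).
Proof.
move=> hm; exists (fun i => - h i m).
by rewrite Dop_top_coef // big_ord_ltn -sumrN; apply: eq_bigr => i _; rewrite mulNr mulrC.
Qed.
End DOperator.

Section DegreeReduction.
Variables (A : comNzRingType) (n : nat) (a : 'I_n -> A).
Hypothesis reg : forall (i : 'I_n) (x : A), in_ideal a i (x * a i) -> in_ideal a i x.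

Lemma Dop_reduce_degree E h :
  (forall i, deg_le E.+1 (h i)) -> (forall m, mdeg m = E.+1 -> Dop a h m = 0) ->
  exists2 h', (forall i, deg_le E (h' i)) & forall m, Dop a h' m = Dop a h m.
Proof.
move=> hE Dh0.
have /functional_choice[b bP] : forall m, exists b, alternating b /\
    (mdeg m = E.+1 -> forall i, h i m = \sum_j b i j * a j).
  move=> m; case: (eqVneq (mdeg m) E.+1) => [mE|mE]; last first.
    by exists (fun _ _ => 0); split=> [|/eqP]; [split=> // *; rewrite oppr0|rewrite (negbTE mE)].
  have syz : \sum_(i < n | (i < n)%N) a i * h i m = 0.
    by apply/eqP; rewrite big_ord_ltn -oppr_eq0 -Dop_top_coef ?Dh0 // mE.
  have [b b_alt bh] := regular_syzygy reg (leqnn n) syz.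
  by exists b; split=> // _ i; rewrite bh // big_ord_ltn.
pose c i j m := if mdeg m == E.+1 then - b m i j else 0.
have c_alt m : alternating (fun i j => c i j m).
  rewrite /c; case: eqP => _; last by split=> *; rewrite ?oppr0.
  by case: (bP m) => -[bN b0] _; split=> [i j|i]; rewrite ?b0 ?oppr0 // bN.
pose k i m := \sum_j Dterm a j (c i j) m.
exists (fun i m => h i m - k i m) => [i m' | m]; last first.
  rewrite !DopE (eq_bigr (fun i => Dterm a i (h i) m - Dterm a i (k i) m)).
    by rewrite sumrB -!DopE Dop_alternating_eq0 // subr0.
  by move=> i _; rewrite DtermB.
apply: contraNT; rewrite -ltnNge subr_eq0 => Em'; apply/eqP.
have c0 j : c i j (incr m' j) = 0 by rewrite /c mdeg_incr eqSS gtn_eqF.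
rewrite /k /Dterm /pderiv (eq_bigr (fun j => - (a j * c i j m'))); last first.
  by move=> j _; rewrite c0 mul0rn sub0r.
case: (eqVneq (mdeg m') E.+1) => mE.
  rewrite /c mE eqxx; case: (bP m') => _ -> //.
  by apply: eq_bigr => j _; rewrite mulrN opprK mulrC.
rewrite (deg_le_eq0 (hE i)) ?big1 // => [j _|]; first by rewrite /c (negbTE mE) mulr0 oppr0.
by rewrite ltn_neqAle eq_sym mE.
Qed.

Lemma Dop_coef_in_ideal d E h :
  (forall i, deg_le E (h i)) -> (forall m, (d < mdeg m)%N -> Dop a h m = 0) ->
  forall m, mdeg m = d -> in_ideal a n (Dop a h m).
Proof.
elim: E h => [|E IH] h hE Dh0 m md.
  by apply: Dop_top_coef_in_ideal => i; apply: deg_le_trans (hE i).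
have [Ed|dE] := leqP E.+1 d.
  by apply: Dop_top_coef_in_ideal => i; rewrite md; apply: deg_le_trans Ed (hE i).
have [|h' h'E Dh'] := Dop_reduce_degree hE; first by move=> m' m'E; apply: Dh0; rewrite m'E.
by rewrite -Dh'; apply: IH => // m' dm'; rewrite Dh'; apply: Dh0.
Qed.
End DegreeReduction.

Theorem lemma2p5 (A : comNzRingType) (n : nat) (a : 'I_n -> A)
  (g : mon n -> A) (d : nat) :
  regular_seq a ->
  fin_supp g ->
  (* g has total degree d *)
  (exists m, g m != 0 /\ mdeg m = d) ->
  (forall m, g m != 0 -> (mdeg m <= d)%N) ->
  (* g lies in the image of D *)
  (exists h : 'I_n -> mon n -> A,
      (forall i, fin_supp (h i)) /\ (forall m, g m = Dop a h m)) ->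
  (* every coefficient of g_d lies in a = A a_1 + ... + A a_n *)
  forall m, mdeg m = d -> in_ideal a n (g m).
Proof.
move=> [reg _] _ _ g_deg [h [h_fin gDh]] m md.
have /functional_choice[E hE] : forall i, exists E, deg_le E (h i).
  by move=> i; apply: fin_supp_deg_le.
rewrite gDh; apply: (Dop_coef_in_ideal reg (E := \max_i E i)) md => [i|m' dm'].
  exact: deg_le_trans (leq_bigmax i) (hE i).
by rewrite -gDh; apply: deg_le_eq0 g_deg dm'.
Qed.
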